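(* Let $f_1,f_2,f_3$ be smooth nowhere-vanishing functions on $\mathbb R^3$ and $g=\frac{1}{f_1^2}dx^1\otimes dx^1+\frac{1}{f_2^2}dx^2\otimes dx^2+\frac{1}{f_3^2}dx^3\otimes dx^3$, with $E_i=f_i\frac{\partial}{\partial x^i}$. (i) $E_2$ is a Killing vector field of $(\mathbb R^3,g)$ if and only if $f_2$ depends only on $x^2$ and $f_1,f_3$ depend only on $(x^1,x^3)$. (ii) $E_3$ is a Killing vector field of $(\mathbb R^3,g)$ if and only if $f_3$ depends only on $x^3$ and $f_1,f_2$ depend only on $(x^1,x^2)$.
   Context: $x^1,x^2,x^3$ are the standard coordinates on $\mathbb R^3$. A vector field $V$ is Killing if $\mathcal L_Vg=0$. *)

From Stdlib Require Import Reals List.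
From Coquelicot Require Import Coquelicot.
Open Scope R_scope.

Inductive idx := I1 | I2 | I3.

Definition idx_eqb (i j : idx) : bool :=
  match i, j with
  | I1, I1 | I2, I2 | I3, I3 => true
  | _, _ => false
  end.

Definition pt := idx -> R.

Definition upd (x : pt) (i : idx) (t : R) : pt :=
  fun j => if idx_eqb j i then t else x j.

Definition partial (i : idx) (f : pt -> R) : pt -> R :=
  fun x => Derive (fun t => f (upd x i t)) (x i).

Fixpoint iter_partial (l : list idx) (f : pt -> R) : pt -> R :=
  match l with
  | nil => f
  | i :: l' => partial i (iter_partial l' f)
  end.

Definition cont_at (F : pt -> R) (x : pt) : Prop :=
  forall eps : R, 0 < eps -> exists delta : R, 0 < delta /\
    forall y : pt, (forall i, Rabs (y i - x i) < delta) -> Rabs (F y - F x) < eps.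

Definition smooth (f : pt -> R) : Prop :=
  forall (l : list idx) (x : pt),
    (forall i, ex_derive (fun t => iter_partial l f (upd x i t)) (x i)) /\
    cont_at (iter_partial l f) x.

Definition sum3 (h : idx -> R) : R := h I1 + h I2 + h I3.

Definition tensor02 := idx -> idx -> pt -> R.
Definition vfield := idx -> pt -> R.

(* Lie derivative (L_V g)_{ij}
   = (L_V g)(d_i, d_j) = V(g(d_i,d_j)) - g([V,d_i],d_j) - g(d_i,[V,d_j]),
   with [V,d_i] = - (d_i V^k) d_k, i.e.
   V^k d_k g_ij + g_kj d_i V^k + g_ik d_j V^k. *)
Definition lie_deriv (V : vfield) (g : tensor02) (i j : idx) (x : pt) : R :=
  sum3 (fun k => V k x * partial k (g i j) x
               + g k j x * partial i (V k) x
               + g i k x * partial j (V k) x).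

Definition Killing (V : vfield) (g : tensor02) : Prop :=
  forall i j x, lie_deriv V g i j x = 0.

Definition diag_metric (f : idx -> pt -> R) : tensor02 :=
  fun i j x => if idx_eqb i j then 1 / (f i x) ^ 2 else 0.

Definition frame_field (f : idx -> pt -> R) (i : idx) : vfield :=
  fun k x => if idx_eqb k i then f i x else 0.

Definition depends_only_on1 (h : pt -> R) (a : idx) : Prop :=
  exists u : R -> R, forall x, h x = u (x a).

Definition depends_only_on2 (h : pt -> R) (a b : idx) : Prop :=
  exists u : R -> R -> R, forall x, h x = u (x a) (x b).

(** The Lie derivative of [g] along [E_a = f_a ∂_a] has only three kinds of
    components: [(L g)_aa = 0], [(L g)_jj = -2 f_a ∂_a f_j / f_j^3] and
    [(L g)_ja = ∂_j f_a / f_a^2] for [j <> a].  As the [f_i] never vanish,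
    [E_a] is Killing iff [∂_a f_j = 0] and [∂_j f_a = 0] for all [j <> a], and
    a differentiable function with vanishing [∂_j] is constant along [x^j]
    by the mean value theorem. *)

From Stdlib Require Import Reals FunctionalExtensionality.
From Coquelicot Require Import Coquelicot.
Open Scope R_scope.

Lemma idx_eq_dec (i j : idx) : {i = j} + {i <> j}.
Proof. decide equality. Defined.

Lemma idx_eqb_eq (i j : idx) : idx_eqb i j = true <-> i = j.
Proof. destruct i, j; simpl; split; congruence. Qed.

Lemma idx_eqb_refl (i : idx) : idx_eqb i i = true.
Proof. now apply idx_eqb_eq. Qed.

Lemma idx_eqb_neq (i j : idx) : i <> j -> idx_eqb i j = false.
Proof. rewrite <- idx_eqb_eq; destruct (idx_eqb i j); congruence. Qed.

Lemma idx_cases (a b c : idx) :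
  a <> b -> a <> c -> b <> c -> forall j, j = a \/ j = b \/ j = c.
Proof. destruct a, b, c, j; intuition congruence. Qed.

Lemma upd_at (x : pt) (i : idx) (t : R) : upd x i t i = t.
Proof. unfold upd; now rewrite idx_eqb_refl. Qed.

Lemma upd_other (x : pt) (i j : idx) (t : R) : j <> i -> upd x i t j = x j.
Proof. intro Hji; unfold upd; now rewrite idx_eqb_neq. Qed.

Lemma upd_same (x : pt) (i : idx) : upd x i (x i) = x.
Proof. apply functional_extensionality; intro j; unfold upd; destruct j, i; reflexivity. Qed.

Lemma upd_upd (x : pt) (i : idx) (s t : R) : upd (upd x i s) i t = upd x i t.
Proof. apply functional_extensionality; intro j; unfold upd; destruct j, i; reflexivity. Qed.

Lemma smooth_ex_derive (h : pt -> R) :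
  smooth h -> forall x i, ex_derive (fun t => h (upd x i t)) (x i).
Proof. intros Hh x i; exact (proj1 (Hh nil x) i). Qed.

Definition indep_of (h : pt -> R) (i : idx) : Prop :=
  forall x t, h (upd x i t) = h x.

Lemma partial_eq0_iff_indep (h : pt -> R) (i : idx) :
  (forall x, ex_derive (fun t => h (upd x i t)) (x i)) ->
  (forall x, partial i h x = 0) <-> indep_of h i.
Proof.
  intro Hd; split.
  - intros Hp x t.
    set (phi := fun s => h (upd x i s)).
    assert (Hphi : forall s, is_derive phi s zero).
    { intro s.
      assert (Eshift : forall r, h (upd (upd x i s) i r) = phi r)
        by (intro r; unfold phi; now rewrite upd_upd).
      pose proof (Hd (upd x i s)) as Hds; pose proof (Hp (upd x i s)) as Hps.
      unfold partial in Hps; rewrite upd_at in Hds, Hps.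
      rewrite (Derive_ext _ _ _ Eshift) in Hps.
      apply (ex_derive_ext _ _ _ Eshift), Derive_correct in Hds.
      now rewrite Hps in Hds. }
    change (phi t = h x).
    replace (h x) with (phi (x i)) by (unfold phi; now rewrite upd_same).
    destruct (Rtotal_order t (x i)) as [Hlt | [-> | Hgt]].
    + now apply eq_is_derive.
    + reflexivity.
    + symmetry; now apply eq_is_derive.
  - intros Hind x; unfold partial.
    rewrite (Derive_ext _ (fun _ => h x)) by (intro; apply Hind).
    apply Derive_const.
Qed.

Lemma indep_agree (h : pt -> R) (a b : idx) :
  (forall j, j <> a -> j <> b -> indep_of h j) ->
  forall x y, x a = y a -> x b = y b -> h x = h y.
Proof.
  intros Hind x y Ha Hb.
  assert (Hstep : forall z j t, (j = a \/ j = b -> z j = t) -> h (upd z j t) = h z).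
  { intros z j t Hzj.
    destruct (idx_eq_dec j a) as [-> | Hja]; [now rewrite <- Hzj, upd_same by auto|].
    destruct (idx_eq_dec j b) as [-> | Hjb]; [now rewrite <- Hzj, upd_same by auto|].
    now apply Hind. }
  replace y with (upd (upd (upd x I1 (y I1)) I2 (y I2)) I3 (y I3))
    by (apply functional_extensionality; intro j; now destruct j).
  rewrite !Hstep; [reflexivity | ..];
    intros [<- | <-]; unfold upd; simpl; congruence.
Qed.

Lemma depends_only_on2_iff (h : pt -> R) (a b : idx) :
  depends_only_on2 h a b <-> forall j, j <> a -> j <> b -> indep_of h j.
Proof.
  split.
  - intros [u Hu] j Hja Hjb x t.
    now rewrite !Hu, !upd_other by auto.
  - intro Hind.
    exists (fun s t => h (upd (upd (fun _ => 0) b t) a s)); intro x.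
    apply (indep_agree h a b Hind); cbv beta; [now rewrite upd_at|].
    destruct (idx_eq_dec b a) as [-> | Hba]; [now rewrite upd_at|].
    now rewrite upd_other, upd_at.
Qed.

Lemma depends_only_on1_iff (h : pt -> R) (a : idx) :
  depends_only_on1 h a <-> forall j, j <> a -> indep_of h j.
Proof.
  transitivity (depends_only_on2 h a a).
  - split.
    + intros [u Hu]; now exists (fun s _ => u s).
    + intros [u Hu]; now exists (fun s => u s s).
  - rewrite depends_only_on2_iff; firstorder.
Qed.

Lemma partial_const (c : R) (i : idx) (x : pt) : partial i (fun _ => c) x = 0.
Proof. unfold partial; apply Derive_const. Qed.

Lemma partial_inv_sqr (h : pt -> R) (i : idx) (x : pt) :
  ex_derive (fun t => h (upd x i t)) (x i) -> h x <> 0 ->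
  partial i (fun y => 1 / h y ^ 2) x = -2 * partial i h x / h x ^ 3.
Proof.
  intros Hd Hx; unfold partial.
  apply Derive_correct in Hd.
  assert (Hsqr : is_derive (fun u => 1 / u ^ 2) (h (upd x i (x i))) (-2 / h x ^ 3)).
  { rewrite upd_same; auto_derive; [auto | field; auto]. }
  apply is_derive_unique.
  replace (-2 * _ / h x ^ 3) with (scal (Derive (fun t => h (upd x i t)) (x i)) (-2 / h x ^ 3))
    by (unfold scal; simpl; unfold mult; simpl; field; auto).
  exact (is_derive_comp _ _ _ _ _ Hsqr Hd).
Qed.

Section FrameField.

Variable f : idx -> pt -> R.
Hypothesis f_derivable : forall i x k, ex_derive (fun t => f i (upd x k t)) (x k).
Hypothesis f_neq0 : forall i x, f i x <> 0.

Lemma lie_deriv_frame_diag (a i j : idx) (x : pt) :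
  lie_deriv (frame_field f a) (diag_metric f) i j x =
  if idx_eqb i j then
    if idx_eqb i a then 0 else -2 * f a x * partial a (f i) x / f i x ^ 3
  else if idx_eqb j a then partial i (f a) x / f a x ^ 2
  else if idx_eqb i a then partial j (f a) x / f a x ^ 2
  else 0.
Proof.
  destruct a, i, j;
    cbv beta iota delta [lie_deriv sum3 frame_field diag_metric idx_eqb];
    rewrite ?partial_const; change (fun y => f ?k y) with (f k);
    rewrite ?partial_inv_sqr by auto; field; auto.
Qed.

Lemma Killing_frame_diag_iff (a : idx) :
  Killing (frame_field f a) (diag_metric f) <->
  forall j, j <> a ->
    (forall x, partial a (f j) x = 0) /\ (forall x, partial j (f a) x = 0).
Proof.
  split.
  - intros Hkill j Hja; split; intro x.
    + pose proof (Hkill j j x) as Hjj.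
      rewrite lie_deriv_frame_diag, idx_eqb_refl, idx_eqb_neq in Hjj by auto.
      replace (partial a (f j) x)
        with (-2 * f a x * partial a (f j) x / f j x ^ 3 * (f j x ^ 3 / (-2 * f a x)))
        by (field; auto).
      rewrite Hjj; ring.
    + pose proof (Hkill j a x) as Hja'.
      rewrite lie_deriv_frame_diag, idx_eqb_refl, idx_eqb_neq in Hja' by auto.
      replace (partial j (f a) x) with (partial j (f a) x / f a x ^ 2 * f a x ^ 2)
        by (field; auto).
      rewrite Hja'; ring.
  - intros Hvanish i j x; rewrite lie_deriv_frame_diag.
    destruct (idx_eq_dec i j) as [<- | Hij]; [rewrite idx_eqb_refl | rewrite idx_eqb_neq by auto].
    + destruct (idx_eq_dec i a) as [-> | Hia]; [now rewrite idx_eqb_refl|].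
      rewrite idx_eqb_neq, (proj1 (Hvanish i Hia) x) by auto; unfold Rdiv; ring.
    + destruct (idx_eq_dec j a) as [-> | Hja]; [rewrite idx_eqb_refl | rewrite idx_eqb_neq by auto].
      * rewrite (proj2 (Hvanish i Hij) x); unfold Rdiv; ring.
      * destruct (idx_eq_dec i a) as [-> | Hia]; [rewrite idx_eqb_refl | now rewrite idx_eqb_neq].
        rewrite (proj2 (Hvanish j Hja) x); unfold Rdiv; ring.
Qed.

Theorem Killing_frame_diag_iff_depends (a b c : idx) :
  a <> b -> a <> c -> b <> c ->
  Killing (frame_field f a) (diag_metric f) <->
  depends_only_on1 (f a) a /\ depends_only_on2 (f b) b c /\ depends_only_on2 (f c) b c.
Proof.
  intros Hab Hac Hbc.
  assert (Hindep : forall i k, (forall x, partial k (f i) x = 0) <-> indep_of (f i) k)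
    by (intros; apply partial_eq0_iff_indep; auto).
  rewrite Killing_frame_diag_iff, depends_only_on1_iff, !depends_only_on2_iff.
  setoid_rewrite Hindep.
  pose proof (idx_cases a b c Hab Hac Hbc) as Hcases.
  split.
  - intro Hkill; split; [|split]; intros j Hj; [now apply Hkill| |];
      intro Hj'; destruct (Hcases j) as [-> | [-> | ->]]; try congruence; apply Hkill; auto.
  - intros [Ha [Hb Hc]] j Hja; split; [|now apply Ha].
    destruct (Hcases j) as [-> | [-> | ->]]; [congruence | apply Hb | apply Hc]; auto.
Qed.

End FrameField.

Theorem mainTheorem5 (f : idx -> pt -> R)
  (Hsmooth : forall i, smooth (f i))
  (Hnz : forall i x, f i x <> 0) :
  (Killing (frame_field f I2) (diag_metric f) <->
     depends_only_on1 (f I2) I2 /\ depends_only_on2 (f I1) I1 I3 /\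
     depends_only_on2 (f I3) I1 I3) /\
  (Killing (frame_field f I3) (diag_metric f) <->
     depends_only_on1 (f I3) I3 /\ depends_only_on2 (f I1) I1 I2 /\
     depends_only_on2 (f I2) I1 I2).
Proof.
  assert (Hd : forall i x k, ex_derive (fun t => f i (upd x k t)) (x k))
    by (intros i; apply smooth_ex_derive, Hsmooth).
  split; apply Killing_frame_diag_iff_depends; auto; discriminate.
Qed.
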